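(* Let $d\ge 1$ and $n,k\ge 0$ be integers. Let $\mathcal{L}_{r\leq d}(n,k)$ (resp. $\mathcal{L}_{c\leq d}(n,k)$) be the set of lonesum $0$-$1$ matrices with $n$ rows and $k$ columns, with no all-zero row and no all-zero column, such that at most $d$ rows (resp. at most $d$ columns) are of the same type, with no restriction on the number of columns (resp. rows) of the same type. Then \begin{align*} |\mathcal{L}_{r\leq d}(n,k)|&=\sum_{m=0}^{\min(n,k)} m!\,S_{\leq d}(n,m)\; m!\,S(k,m),\\ |\mathcal{L}_{c\leq d}(n,k)|&=\sum_{m=0}^{\min(n,k)} m!\,S(n,m)\; m!\,S_{\leq d}(k,m). \end{align*}
   Context: A $0$-$1$ matrix is lonesum if it is uniquely determined by its row sum vector and column sum vector; equivalently, it contains no $2\times 2$ submatrix equal to $\begin{pmatrix}1&0\\0&1\end{pmatrix}$ or $\begin{pmatrix}0&1\\1&0\end{pmatrix}$. Two rows (resp. columns) are of the same type iff they are identical vectors. $S(n,m)$ is the Stirling number of the second kind (number of partitions of an $n$-set into $m$ non-empty blocks), and $S_{\leq d}(n,m)$ is the number of such partitions in which every block has at most $d$ elements (with $S(0,0)=S_{\le d}(0,0)=1$). *)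

From mathcomp Require Import all_boot all_order all_algebra.
Set Implicit Arguments. Unset Strict Implicit. Unset Printing Implicit Defensive.

Definition rowsum n k (A : 'M[bool]_(n, k)) (i : 'I_n) : nat :=
  \sum_(j < k) nat_of_bool (A i j).
Definition colsum n k (A : 'M[bool]_(n, k)) (j : 'I_k) : nat :=
  \sum_(i < n) nat_of_bool (A i j).

Definition lonesum n k (A : 'M[bool]_(n, k)) : bool :=
  [forall B : 'M[bool]_(n, k),
     ([forall i, rowsum B i == rowsum A i] && [forall j, colsum B j == colsum A j])
     ==> (B == A)].

Definition no_zero_row n k (A : 'M[bool]_(n, k)) : bool :=
  [forall i, exists j, A i j].
Definition no_zero_col n k (A : 'M[bool]_(n, k)) : bool :=
  [forall j, exists i, A i j].

Definition rows_le n k (d : nat) (A : 'M[bool]_(n, k)) : bool :=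
  [forall i, #|[set i' : 'I_n | row i' A == row i A]| <= d].
Definition cols_le n k (d : nat) (A : 'M[bool]_(n, k)) : bool :=
  [forall j, #|[set j' : 'I_k | col j' A == col j A]| <= d].

Definition Lr n k d : {set 'M[bool]_(n, k)} :=
  [set A | [&& lonesum A, no_zero_row A, no_zero_col A & rows_le d A]].
Definition Lc n k d : {set 'M[bool]_(n, k)} :=
  [set A | [&& lonesum A, no_zero_row A, no_zero_col A & cols_le d A]].

Definition stirling2 (n m : nat) : nat :=
  #|[set P : {set {set 'I_n}} | partition P [set: 'I_n] && (#|P| == m)]|.
Definition stirling2_le (d n m : nat) : nat :=
  #|[set P : {set {set 'I_n}} | [&& partition P [set: 'I_n], #|P| == m
                                   & [forall B in P, #|B| <= d]]]|.

From mathcomp Require Import all_boot all_order all_algebra zify.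
Set Implicit Arguments. Unset Strict Implicit. Unset Printing Implicit Defensive.

(* A lonesum matrix contains no 2x2 switch, so its row supports form a chain
   under inclusion.  If the chain has m members, let f i be the height of row i
   in the chain and g j the number of members missing column j; then
   A i j = (g j <= f i), and without zero rows or columns f and g are
   surjections onto 'I_m.  Conversely every such staircase matrix is lonesum
   and determines f and g, and at most d rows share a type exactly when the
   fibres of f have at most d elements.  A surjection onto an m-set is a
   partition into m blocks together with a bijection from its blocks, whence
   the factors m! S(n, m); the second formula is the first for the transpose.
*)

Definition surjectiveb (aT rT : finType) (f : aT -> rT) :=
  [forall y, exists x, f x == y].

Lemma leq_card_surjective (aT rT : finType) (f : aT -> rT) :
  surjectiveb f -> #|rT| <= #|aT|.
Proof.
move=> /forallP fS; apply: leq_trans (leq_image_card f aT).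
apply: subset_leq_card; apply/subsetP => y _.
by have /existsP[x /eqP <-] := fS y; apply: image_f.
Qed.

Section Fibres.
Variables (d : nat) (aT rT : finType).
Implicit Types (f : {ffun aT -> rT}) (x : aT) (y : rT).

Definition fibres (f : {ffun aT -> rT}) : {ffun rT -> {set aT}} :=
  [ffun y => f @^-1: [set y]].

Definition fibre_partition (f : {ffun aT -> rT}) := [set fibres f y | y : rT].

Definition surjections_le :=
  [set f : {ffun aT -> rT} | surjectiveb f && [forall y, #|fibres f y| <= d]].

Definition partitions_le :=
  [set P : {set {set aT}} |
     [&& partition P [set: aT], #|P| == #|rT| & [forall B in P, #|B| <= d]]].

Lemma mem_fibres f x y : (x \in fibres f y) = (f x == y).
Proof. by rewrite ffunE !inE. Qed.

Lemma fibres_inj : injective fibres.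
Proof.
by move=> f f' E; apply/ffunP => x; apply/eqP; rewrite -mem_fibres E mem_fibres.
Qed.

Lemma fibres_neq0 f y : surjectiveb f -> fibres f y != set0.
Proof.
by move=> /forallP/(_ y)/existsP[x fx]; apply/set0Pn; exists x; rewrite mem_fibres.
Qed.

Lemma injective_fibres f : surjectiveb f -> injective (fibres f).
Proof.
move=> fS y y' E; have /set0Pn[x xy] := fibres_neq0 y fS.
have xy' : x \in fibres f y' by rewrite -E.
by move: xy xy'; rewrite !mem_fibres => /eqP <- /eqP.
Qed.

Lemma fibre_partitionP f : surjectiveb f -> partition (fibre_partition f) [set: aT].
Proof.
move=> fS; apply/and3P; split.
- apply/eqP/setP => x; rewrite inE; apply/bigcupP.
  by exists (fibres f (f x)); rewrite ?imset_f ?mem_fibres.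
- apply/trivIsetP => _ _ /imsetP[y _ ->] /imsetP[y' _ ->] neq.
  apply/pred0P => x /=; rewrite !mem_fibres.
  by apply: contraNF neq => /andP[/eqP <- /eqP <-].
- by apply/imsetP => -[y _ /esym/eqP]; apply/negP/fibres_neq0.
Qed.

Lemma surjections_le_partition f :
  f \in surjections_le -> fibre_partition f \in partitions_le.
Proof.
rewrite !inE => /andP[fS /forallP fd]; rewrite fibre_partitionP //=.
rewrite card_imset ?eqxx; last exact: injective_fibres.
by apply/forallP => B; apply/implyP => /imsetP[y _ ->].
Qed.

Lemma exists_fibres P (h : {ffun rT -> {set aT}}) :
  partition P [set: aT] -> [set h y | y : rT] = P -> injective h ->
  exists f, fibres f = h.
Proof.
move=> /and3P[/eqP coverP trivP _] imh hI.
have hP y : h y \in P by rewrite -imh imset_f.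
have cover_h x : exists y, x \in h y.
  have : x \in cover P by rewrite coverP inE.
  by case/bigcupP => B; rewrite -imh => /imsetP[y _ ->]; exists y.
have unique_h x y y' : x \in h y -> x \in h y' -> y = y'.
  move=> xy xy'; apply: hI.
  by rewrite -(def_pblock trivP (hP y) xy) (def_pblock trivP (hP y') xy').
exists [ffun x => xchoose (cover_h x)]; apply/ffunP => y; apply/setP => x.
rewrite mem_fibres ffunE; have xh := xchooseP (cover_h x).
by apply/eqP/idP => [<- // | /(unique_h _ _ _ xh)].
Qed.

Lemma imset_fibres_surjections_le P : P \in partitions_le ->
  fibres @: [set f in surjections_le | fibre_partition f == P] =
  [set h in ffun_on (mem P) | injectiveb h].
Proof.
rewrite inE => /and3P[partP /eqP cardP /forallP smallP].
apply/setP => h; apply/imsetP/idP => [[f] | ].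
  rewrite !inE => /andP[/andP[fS _] /eqP <-] ->; apply/andP; split.
    by apply/ffun_onP => y; apply: imset_f.
  exact/injectiveP/injective_fibres.
rewrite inE => /andP[/ffun_onP hP /injectiveP hI].
have imh : [set h y | y : rT] = P.
  apply/eqP; rewrite eqEcard card_imset // cardP leqnn andbT.
  by apply/subsetP => _ /imsetP[y _ ->]; apply: hP.
have [f fh] := exists_fibres partP imh hI.
exists f => //; rewrite !inE /fibre_partition fh imh eqxx andbT.
apply/andP; split.
  apply/forallP => y; have /set0Pn[x] : h y != set0.
    by apply: contraTneq (hP y) => ->; case/and3P: partP.
  by rewrite -fh mem_fibres => fx; apply/existsP; exists x.
by apply/forallP => y; apply: (implyP (smallP _)); apply: hP.
Qed.

Lemma card_surjections_le : #|surjections_le| = #|rT|`! * #|partitions_le|.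
Proof.
rewrite -sum1_card (partition_big fibre_partition (mem partitions_le)) /=;
  last exact: surjections_le_partition.
rewrite mulnC -sum_nat_const; apply: eq_bigr => P PP.
rewrite (eq_bigl (mem [set f in surjections_le | fibre_partition f == P]));
  last by move=> f; rewrite !inE.
rewrite sum1_card -(card_imset _ fibres_inj) imset_fibres_surjections_le //.
rewrite card_inj_ffuns_on; move: PP; rewrite inE => /and3P[_ /eqP-> _].
by rewrite ffactnn.
Qed.

End Fibres.

Lemma leqif_threshold_cell (x y : bool) (a b : nat) : a != b -> x = (b < a) ->
  y * a + x * b <= x * a + y * b ?= iff (x == y).
Proof. by move=> /eqP neq ->; apply/leqifP; case: y; case: (ltnP b a) => /= h; lia. Qed.

(* If B has the margins of A, then \sum_(i, j) (A i j - B i j) * (a i - b j)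
   vanishes, while each of its terms is nonnegative and is zero only when
   A i j = B i j; the cell inequality is rearranged to avoid subtraction. *)
Lemma lonesum_threshold n k (a : 'I_n -> nat) (b : 'I_k -> nat) :
  (forall i j, a i != b j) -> lonesum (\matrix_(i, j) (b j < a i)%N).
Proof.
move=> neq_ab; apply/forallP => B; apply/implyP => /andP[/forallP rB /forallP cB].
set A := (\matrix_(i, j) (b j < a i)%N)%R.
have cell i j := leqif_threshold_cell (B i j) (neq_ab i j) (mxE _ _ i j : A i j = _).
have [_] := @leqif_sum _ predT _ _ _
  (fun i _ => @leqif_sum _ predT _ _ _ (fun j _ => cell i j)).
have -> : \sum_i \sum_j (B i j * a i + A i j * b j) =
          \sum_i \sum_j (A i j * a i + B i j * b j).
  rewrite !(eq_bigr _ (fun i _ => big_split _ _ _ _ _)) !big_split /=.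
  congr (_ + _).
    apply: eq_bigr => i _; rewrite -!big_distrl /=.
    by congr (_ * _); apply/eqP: (rB i).
  rewrite !(exchange_big _ _ _ _ _ (fun i j => _ * b j)) /=.
  apply: eq_bigr => j _; rewrite -!big_distrl /=.
  by congr (_ * _); exact/esym/eqP/(cB j).
rewrite /= eqxx => /esym/forallP eqAB; apply/eqP/matrixP => i j.
by have /forallP/(_ j)/eqP := eqAB i.
Qed.

Lemma sum_flip2 (I : finType) (v : I -> bool) (x1 x2 : I) : v x1 != v x2 ->
  \sum_x nat_of_bool (v x (+) (x \in [set x1; x2])) = \sum_x nat_of_bool (v x).
Proof.
move=> neq; have neq21 : x2 != x1 by apply: contraNneq neq => ->.
have split2 (F : I -> nat) :
    \sum_x F x = F x1 + F x2 + \sum_(x | x \notin [set x1; x2]) F x.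
  rewrite (bigD1 x1) // (bigD1 x2) ?neq21 //= addnA; congr (_ + _).
  by apply: eq_bigl => x; rewrite !inE negb_or andbC.
rewrite !split2 !inE !eqxx orbT; congr (_ + _).
  by case: (v x1) (v x2) neq => -[].
by apply: eq_bigr => x /negbTE ->; rewrite addbF.
Qed.

(* Flipping the four entries of a switch preserves all margins. *)
Lemma lonesum_switch n k (A : 'M[bool]_(n, k)) i1 i2 j1 j2 :
  lonesum A -> A i1 j1 -> A i2 j2 -> A i1 j2 || A i2 j1.
Proof.
move=> /forallP lsA a11 a22; apply/negPn/negP => /norP[/negbTE a12 /negbTE a21].
pose B := (\matrix_(i, j) (A i j (+) (i \in [set i1; i2]) && (j \in [set j1; j2])))%R.
have rowsB i : rowsum B i = rowsum A i.
  rewrite /rowsum; under eq_bigr do rewrite mxE.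
  case: (boolP (i \in [set i1; i2])) => [|_]; last by under eq_bigr do rewrite addbF.
  by rewrite !inE => /orP[]/eqP->; apply: sum_flip2; rewrite ?a11 ?a12 ?a21 ?a22.
have colsB j : colsum B j = colsum A j.
  rewrite /colsum; under eq_bigr do rewrite mxE andbC.
  case: (boolP (j \in [set j1; j2])) => [|_]; last by under eq_bigr do rewrite addbF.
  by rewrite !inE => /orP[]/eqP->; apply: sum_flip2; rewrite ?a11 ?a12 ?a21 ?a22.
have /eqP/matrixP/(_ i1 j1) : B == A.
  apply: (implyP (lsA B)); apply/andP.
  by split; apply/forallP => x; rewrite ?rowsB ?colsB eqxx.
by rewrite mxE !inE !eqxx a11.
Qed.

Section SetChains.
Variables (K : finType) (T : {set {set K}}).
Implicit Types (u v : {set K}) (x : K).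

Definition height u := #|[set v in T | v \proper u]|.
Definition depth x := #|[set v in T | x \notin v]|.

Lemma height_lt_card u : u \in T -> height u < #|T|.
Proof.
move=> uT; apply: proper_card; apply/properP; split.
  by apply/subsetP => v; rewrite inE => /andP[].
by exists u; rewrite ?inE ?properxx ?andbF.
Qed.

Lemma depth_lt_card x u : u \in T -> x \in u -> depth x < #|T|.
Proof.
move=> uT xu; apply: proper_card; apply/properP; split.
  by apply/subsetP => v; rewrite inE => /andP[].
by exists u; rewrite ?inE ?xu ?andbF.
Qed.

Lemma subset_height u v : u \subset v -> height u <= height v.
Proof.
move=> uv; apply/subset_leq_card/subsetP => w; rewrite !inE => /andP[-> wu].
exact: proper_sub_trans wu uv.
Qed.

Lemma proper_height u v : u \in T -> u \proper v -> height u < height v.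
Proof.
move=> uT uv; apply: proper_card; apply/properP; split.
  by apply/subsetP => w; rewrite !inE => /andP[-> /proper_trans->].
by exists u; rewrite !inE ?uT ?uv ?properxx.
Qed.

Hypothesis chainT : {in T &, forall u v, (u \subset v) || (v \subset u)}.

Lemma height_inj : {in T &, injective height}.
Proof.
move=> u v uT vT; apply: contra_eq => neq.
have [uv | vu] := orP (chainT uT vT).
  by rewrite neq_ltn proper_height // properEneq neq.
by rewrite neq_ltn orbC proper_height // properEneq eq_sym neq.
Qed.

Lemma height_onto t : t < #|T| -> exists2 u, u \in T & height u = t.
Proof.
move=> ltT; have uniq_heights : uniq [seq height u | u <- enum T].
  rewrite map_inj_in_uniq ?enum_uniq // => u v.
  by rewrite !mem_enum; apply: height_inj.
have heights_lt : {subset [seq height u | u <- enum T] <= iota 0 #|T|}.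
  by move=> h /mapP[u]; rewrite mem_enum mem_iota add0n => /height_lt_card ? ->.
have [|_ heightsE] := uniq_min_size uniq_heights heights_lt.
  by rewrite size_iota size_map -cardE.
have /mapP[u] : t \in [seq height u | u <- enum T] by rewrite heightsE mem_iota.
by rewrite mem_enum; exists u.
Qed.

(* The members of a chain missing x form an initial segment of it. *)
Lemma mem_chainE x u : u \in T -> (x \in u) = (depth x <= height u).
Proof.
move=> uT; apply/idP/idP => [xu | ].
  apply/subset_leq_card/subsetP => v; rewrite !inE => /andP[vT xv].
  rewrite vT properEneq.
  have [vu | /subsetP/(_ x xu)] := orP (chainT vT uT); last by rewrite (negbTE xv).
  by rewrite vu andbT; apply: contraNneq xv => ->.
apply: contraTT => xu; rewrite -ltnNge; apply: proper_card; apply/properP; split.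
  apply/subsetP => v; rewrite !inE => /andP[-> /proper_sub/subsetP vu] /=.
  by apply: contra xu; apply: vu.
by exists u; rewrite !inE ?uT ?xu ?properxx.
Qed.

Hypothesis T_neq0 : set0 \notin T.

Lemma depth_onto t : t < #|T| -> exists x, depth x = t.
Proof.
move=> ltT; have [u uT hu] := height_onto ltT.
case: t => [|s] in ltT hu *.
  have /set0Pn[x xu] : u != set0 by apply: contraNneq T_neq0 => <-.
  by exists x; apply/eqP; rewrite -leqn0 -hu -mem_chainE.
have [v vT hv] := height_onto (ltnW ltT).
have /properP[_ [x xu xv]] : v \proper u.
  have [vu | uv] := orP (chainT vT uT).
    by rewrite properEneq vu andbT; apply/eqP => vE; move: hu; rewrite -vE hv; lia.
  by have := subset_height uv; rewrite hu hv ltnn.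
exists x; apply/eqP; rewrite eqn_leq -{1}hu -mem_chainE // xu ltnNge -hv.
by rewrite -mem_chainE.
Qed.

End SetChains.

Lemma card_ord_lt m t : t <= m -> #|[set s : 'I_m | s < t]| = t.
Proof.
move=> le_tm; rewrite -sum1dep_card -(big_ord_widen _ (fun _ => 1) le_tm).
by rewrite sum1_card card_ord.
Qed.

Lemma card_sep_imset (aT rT : finType) (h : aT -> rT) (P : pred rT) :
  injective h -> #|[set v in [set h x | x : aT] | P v]| = #|[set x | P (h x)]|.
Proof.
move=> hI; rewrite -(card_imset _ hI); apply: eq_card => v; rewrite inE.
apply/andP/imsetP => [[/imsetP[x _ ->] Px] | [x]]; first by exists x; rewrite ?inE.
by rewrite inE => Px ->; rewrite imset_f.
Qed.

Definition row_support n k (A : 'M[bool]_(n, k)) i : {set 'I_k} := [set j | A i j].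
Definition row_supports n k (A : 'M[bool]_(n, k)) := [set row_support A i | i : 'I_n].

Lemma eq_row_support n k (A : 'M[bool]_(n, k)) i i' :
  (row_support A i == row_support A i') = (row i A == row i' A).
Proof.
apply/eqP/eqP => [/setP E | E].
  by apply/rowP => j; rewrite !mxE; have := E j; rewrite !inE.
by apply/setP => j; rewrite !inE; have /rowP/(_ j) := E; rewrite !mxE.
Qed.

Lemma lonesum_row_supports_chain n k (A : 'M[bool]_(n, k)) : lonesum A ->
  {in row_supports A &, forall u v : {set 'I_k}, (u \subset v) || (v \subset u)}.
Proof.
move=> lsA _ _ /imsetP[i _ ->] /imsetP[i' _ ->].
case: (boolP (row_support A i \subset row_support A i')) => //= /subsetPn[j1].
rewrite !inE => a1 /negbTE na1'; apply/subsetP => j2; rewrite !inE => a2'.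
by have := lonesum_switch lsA a1 a2'; rewrite na1' orbF.
Qed.

Definition staircase n k m (f : {ffun 'I_n -> 'I_m}) (g : {ffun 'I_k -> 'I_m}) :
  'M[bool]_(n, k) := \matrix_(i, j) (g j <= f i)%N.

Section Staircase.
Variables (n k m : nat) (f : {ffun 'I_n -> 'I_m}) (g : {ffun 'I_k -> 'I_m}).

Definition sublevel (t : 'I_m) := [set j | g j <= t].

Lemma row_support_staircase i : row_support (staircase f g) i = sublevel (f i).
Proof. by apply/setP => j; rewrite !inE mxE. Qed.

Lemma lonesum_staircase : lonesum (staircase f g).
Proof.
have -> : staircase f g = (\matrix_(i, j) ((g j).*2 < (f i).*2.+1)%N)%R.
  by apply/matrixP => i j; rewrite !mxE ltnS leq_double.
apply: lonesum_threshold => i j; apply/eqP => /(congr1 odd).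
by rewrite /= !odd_double.
Qed.

Hypothesis gS : surjectiveb g.

Lemma proper_sublevel s t : (sublevel s \proper sublevel t) = (s < t).
Proof.
rewrite properE; apply/andP/idP => [[_ /subsetPn[j]] | lt_st].
  by rewrite !inE -ltnNge => le_jt lt_sj; apply: leq_trans lt_sj le_jt.
split.
  by apply/subsetP => j; rewrite !inE => le_js; apply: leq_trans le_js (ltnW lt_st).
have /existsP[j /eqP gj] := forallP gS t.
by apply/subsetPn; exists j; rewrite !inE gj // -ltnNge.
Qed.

Lemma sublevel_inj : injective sublevel.
Proof.
move=> s t E; apply: val_inj.
case: (ltngtP s t) => // lt.
  by move: (proper_sublevel s t); rewrite E properxx lt.
by move: (proper_sublevel t s); rewrite E properxx lt.
Qed.

Hypothesis fS : surjectiveb f.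

Lemma row_supports_staircase :
  row_supports (staircase f g) = [set sublevel t | t : 'I_m].
Proof.
apply/setP => u; apply/imsetP/imsetP => [[i _ ->] | [t _ ->]].
  by exists (f i); rewrite ?row_support_staircase.
have /existsP[i /eqP fi] := forallP fS t.
by exists i; rewrite ?row_support_staircase ?fi.
Qed.

Lemma card_row_supports_staircase : #|row_supports (staircase f g)| = m.
Proof.
by rewrite row_supports_staircase card_imset ?card_ord //; apply: sublevel_inj.
Qed.

Lemma height_staircase i :
  height (row_supports (staircase f g)) (row_support (staircase f g) i) = f i.
Proof.
rewrite row_support_staircase row_supports_staircase /height card_sep_imset;
  last exact: sublevel_inj.
rewrite -[RHS](card_ord_lt (ltnW (ltn_ord (f i)))).
by apply: eq_card => t; rewrite !inE proper_sublevel.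
Qed.

Lemma depth_staircase j : depth (row_supports (staircase f g)) j = g j.
Proof.
rewrite row_supports_staircase /depth card_sep_imset; last exact: sublevel_inj.
rewrite -[RHS](card_ord_lt (ltnW (ltn_ord (g j)))).
by apply: eq_card => t; rewrite !inE -ltnNge.
Qed.

Lemma staircase_in_Lr d :
  f \in surjections_le d 'I_n 'I_m -> staircase f g \in Lr n k d.
Proof.
rewrite !inE lonesum_staircase => /andP[_ /forallP fd] /=; apply/and3P; split.
- apply/forallP => i; have /existsP[j /eqP gj] := forallP gS (f i).
  by apply/existsP; exists j; rewrite mxE gj.
- apply/forallP => j; have /existsP[i /eqP fi] := forallP fS (g j).
  by apply/existsP; exists i; rewrite mxE fi.
- apply/forallP => i.
  have -> : [set i' | row i' (staircase f g) == row i (staircase f g)] = fibres f (f i).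
    apply/setP => i'; rewrite mem_fibres inE -eq_row_support.
    by rewrite !row_support_staircase (inj_eq sublevel_inj).
  exact: fd.
Qed.

End Staircase.

Lemma staircase_inj n k m (f f' : {ffun 'I_n -> 'I_m}) (g g' : {ffun 'I_k -> 'I_m}) :
  surjectiveb f -> surjectiveb g -> surjectiveb f' -> surjectiveb g' ->
  staircase f g = staircase f' g' -> f = f' /\ g = g'.
Proof.
move=> fS gS f'S g'S E; split; apply/ffunP => x; apply: ord_inj.
  by rewrite -(height_staircase gS fS) -(height_staircase g'S f'S) E.
by rewrite -(depth_staircase gS fS) -(depth_staircase g'S f'S) E.
Qed.

Section LonesumStaircase.
Variables (n k : nat) (A : 'M[bool]_(n, k)).

Lemma row_support_in i : row_support A i \in row_supports A.
Proof. exact: imset_f. Qed.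

Definition row_height : {ffun 'I_n -> 'I_#|row_supports A|} :=
  [ffun i => Ordinal (height_lt_card (row_support_in i))].

Hypothesis nzcA : no_zero_col A.

Lemma depth_lt_card_row_supports j : depth (row_supports A) j < #|row_supports A|.
Proof.
have /existsP[i aij] := forallP nzcA j.
by apply: depth_lt_card (row_support_in i) _; rewrite inE.
Qed.

Definition col_depth : {ffun 'I_k -> 'I_#|row_supports A|} :=
  [ffun j => Ordinal (depth_lt_card_row_supports j)].

Hypothesis lsA : lonesum A.

Lemma staircase_row_height_col_depth : A = staircase row_height col_depth.
Proof.
apply/matrixP => i j; rewrite mxE !ffunE /= -mem_chainE ?row_support_in ?inE //.
exact: lonesum_row_supports_chain.
Qed.

Lemma row_height_surjective : surjectiveb row_height.
Proof.
apply/forallP => t; have [_ /imsetP[i _ ->] hi] :=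
  height_onto (lonesum_row_supports_chain lsA) (ltn_ord t).
by apply/existsP; exists i; apply/eqP/val_inj; rewrite ffunE.
Qed.

Lemma fibres_row_height i :
  fibres row_height (row_height i) = [set i' | row i' A == row i A].
Proof.
apply/setP => i'; rewrite mem_fibres inE -eq_row_support -val_eqE !ffunE /=.
apply/eqP/eqP => [| -> //].
by apply: (height_inj (lonesum_row_supports_chain lsA)); apply: row_support_in.
Qed.

Hypothesis nzrA : no_zero_row A.

Lemma col_depth_surjective : surjectiveb col_depth.
Proof.
have T_neq0 : set0 \notin row_supports A.
  apply/imsetP => -[i _ /esym/setP E]; have /existsP[j aij] := forallP nzrA i.
  by have := E j; rewrite !inE aij.
apply/forallP => t.
have [j dj] := depth_onto (lonesum_row_supports_chain lsA) T_neq0 (ltn_ord t).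
by apply/existsP; exists j; apply/eqP/val_inj; rewrite ffunE.
Qed.

End LonesumStaircase.

Lemma Lr_staircase n k d m (A : 'M[bool]_(n, k)) :
  A \in Lr n k d -> #|row_supports A| = m ->
  exists f g, [/\ f \in surjections_le d 'I_n 'I_m, g \in surjections_le k 'I_k 'I_m
                & A = staircase f g].
Proof.
rewrite inE => /and4P[lsA nzrA nzcA /forallP rowsA] <-.
exists (row_height A), (col_depth nzcA); split.
- rewrite inE row_height_surjective //=; apply/forallP => t.
  have /existsP[i /eqP <-] := forallP (row_height_surjective lsA) t.
  by rewrite fibres_row_height.
- rewrite inE col_depth_surjective //=; apply/forallP => t.
  by apply: leq_trans (max_card _) _; rewrite card_ord.
- exact: staircase_row_height_col_depth.
Qed.

Lemma card_row_supports_Lr n k d (A : 'M[bool]_(n, k)) :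
  A \in Lr n k d -> #|row_supports A| <= minn n k.
Proof.
move=> /Lr_staircase/(_ erefl) [f [g [fS gS _]]]; move: fS gS; rewrite !inE leq_min.
move=> /andP[/leq_card_surjective + _] /andP[/leq_card_surjective + _].
by rewrite !card_ord => -> ->.
Qed.

Lemma Lr_row_supportsE n k d m (A : 'M[bool]_(n, k)) :
  (A \in Lr n k d) && (#|row_supports A| == m) =
  (A \in [set staircase fg.1 fg.2 | fg in
             setX (surjections_le d 'I_n 'I_m) (surjections_le k 'I_k 'I_m)]).
Proof.
apply/andP/imsetP => [[AL /eqP types_m] | [[f g]]].
  have [f [g [fS gS ->]]] := Lr_staircase AL types_m.
  by exists (f, g) => //; apply/setXP.
rewrite inE /= => /andP[]; rewrite !inE => /andP[fS fd] /andP[gS _] ->.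
split; last by rewrite card_row_supports_staircase.
by have := staircase_in_Lr gS fS (d := d); rewrite !inE fS fd => /(_ isT).
Qed.

Lemma card_Lr n k d : #|Lr n k d| = \sum_(m < (minn n k).+1)
  #|surjections_le d 'I_n 'I_m| * #|surjections_le k 'I_k 'I_m|.
Proof.
pose types (A : 'M[bool]_(n, k)) : 'I_(minn n k).+1 := inord #|row_supports A|.
rewrite -sum1_card (partition_big types xpredT) //=.
apply: eq_bigr => m _; rewrite sum1dep_card -cardsX.
rewrite -(@card_in_imset _ _ (fun fg => staircase fg.1 fg.2)); last first.
  move=> [f g] [f' g']; rewrite !inE /= => /andP[/andP[fS _] /andP[gS _]].
  by move=> /andP[/andP[f'S _] /andP[g'S _]] /(staircase_inj fS gS f'S g'S) [-> ->].
apply: eq_card => A; rewrite inE -Lr_row_supportsE.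
case AL: (A \in Lr n k d) => //=.
by rewrite -val_eqE /= inordK // ltnS (card_row_supports_Lr AL).
Qed.

Lemma rowsum_trmx n k (A : 'M[bool]_(n, k)) i : rowsum (trmx A) i = colsum A i.
Proof. by apply: eq_bigr => j _; rewrite mxE. Qed.

Lemma colsum_trmx n k (A : 'M[bool]_(n, k)) j : colsum (trmx A) j = rowsum A j.
Proof. by apply: eq_bigr => i _; rewrite mxE. Qed.

Lemma lonesum_trmx n k (A : 'M[bool]_(n, k)) : lonesum (trmx A) = lonesum A.
Proof.
suff lonesumT n' k' (B : 'M[bool]_(n', k')) : lonesum B -> lonesum (trmx B).
  by apply/idP/idP => /lonesumT; rewrite ?trmxK.
move=> /forallP lsB; apply/forallP => C; apply/implyP => /andP[/forallP rC /forallP cC].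
rewrite -(inj_eq (@trmx_inj _ _ _)) trmxK; apply: (implyP (lsB (trmx C))).
apply/andP; split; apply/forallP => x.
  by rewrite rowsum_trmx -colsum_trmx.
by rewrite colsum_trmx -rowsum_trmx.
Qed.

Lemma Lc_trmx n k d (A : 'M[bool]_(n, k)) : (A \in Lc n k d) = ((trmx A) \in Lr k n d).
Proof.
have nzr_trmx : no_zero_row (trmx A) = no_zero_col A.
  by apply: eq_forallb => j; apply: eq_existsb => i; rewrite mxE.
have nzc_trmx : no_zero_col (trmx A) = no_zero_row A.
  by apply: eq_forallb => i; apply: eq_existsb => j; rewrite mxE.
have rows_le_trmx : rows_le d (trmx A) = cols_le d A.
  apply: eq_forallb => j; congr (_ <= d); apply: eq_card => j'.
  by rewrite !inE -!tr_col (inj_eq (@trmx_inj _ _ _)).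
rewrite !inE lonesum_trmx nzr_trmx nzc_trmx rows_le_trmx.
by case: (lonesum A) (no_zero_row A) (no_zero_col A) => -[] [].
Qed.

Lemma card_Lc n k d : #|Lc n k d| = #|Lr k n d|.
Proof.
rewrite -(card_imset _ (@trmx_inj _ _ _)); apply: eq_card => B.
apply/imsetP/idP => [[A AL ->] | BL]; first by rewrite -Lc_trmx.
by exists (trmx B); rewrite ?trmxK // Lc_trmx trmxK.
Qed.

Lemma card_surjections_le_ord d n m :
  #|surjections_le d 'I_n 'I_m| = m`! * stirling2_le d n m.
Proof. by rewrite card_surjections_le /partitions_le card_ord. Qed.

Lemma stirling2E n m : stirling2 n m = stirling2_le n n m.
Proof.
apply: eq_card => P; rewrite !inE; congr (_ && _); rewrite -[LHS]andbT; congr (_ && _).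
apply/esym/forallP => B; apply/implyP => _.
by apply: leq_trans (max_card _) _; rewrite card_ord.
Qed.

Theorem corollary1 (d n k : nat) : 1 <= d ->
  #|Lr n k d| = \sum_(m < (minn n k).+1)
                   m`! * stirling2_le d n m * (m`! * stirling2 k m) /\
  #|Lc n k d| = \sum_(m < (minn n k).+1)
                   m`! * stirling2 n m * (m`! * stirling2_le d k m).
Proof.
move=> _; split.
  rewrite card_Lr; apply: eq_bigr => m _.
  by rewrite !card_surjections_le_ord stirling2E.
rewrite card_Lc card_Lr minnC; apply: eq_bigr => m _.
by rewrite !card_surjections_le_ord stirling2E mulnC.
Qed.
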